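(* Define $\sigma:\mathbb{R}\to\mathbb{R}$ by $\sigma(x)=-1$ for $x\in(-1,0]$, $\sigma(x)=1$ for $x\in(0,1]$, and recursively, for every integer $n\ge0$, $$\sigma(x)=\sigma(x+2\cdot3^n)-\frac1{(n+1)^2}\ \text{ for }x\in(-3^{n+1},-3^n],\qquad \sigma(x)=\sigma(x-2\cdot3^n)+\frac1{(n+1)^2}\ \text{ for }x\in(3^n,3^{n+1}].$$ Then for every $x\ge1$, $$\int_0^x\sigma(t)\,dt\ \ge\ \frac{x}{2(\log_3x+1)^2}.$$ *)

From Stdlib Require Import Reals Lra Lia ZArith.
Open Scope R_scope.

(* sigma_aux k x computes sigma(x) correctly for x in (-3^k, 3^k],
   unfolding the recursive definition level by level. *)
Fixpoint sigma_aux (k : nat) (x : R) : R :=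
  match k with
  | O => if Rle_dec x 0 then -1 else 1
  | S k' =>
      if Rlt_dec (3 ^ k') x then
        sigma_aux k' (x - 2 * 3 ^ k') + 1 / (INR k' + 1) ^ 2
      else if Rle_dec x (- 3 ^ k') then
        sigma_aux k' (x + 2 * 3 ^ k') - 1 / (INR k' + 1) ^ 2
      else sigma_aux k' x
  end.

(* Enough fuel: 3^N >= N+1 > |x| when N = up |x| (as a natural). *)
Definition sigmaF (x : R) : R := sigma_aux (Z.to_nat (up (Rabs x))) x.

Definition log3 (x : R) : R := ln x / ln 3.

From Stdlib Require Import Reals Lra Lia ZArith.
Open Scope R_scope.

(* sigma is constant on each interval (j-1, j] with j an integer, so for
   m < x <= m + 1 the integral over [0, x] is S(m) + sigma(m+1) (x - m), where
   S(m) = sigma(1) + ... + sigma(m).  On the integers sigma is antisymmetric,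
   sigma(1 - z) = - sigma(z); combined with the recursion this gives, for
   0 <= e, d <= 3^n, with w_n = 1/(n+1)^2,
     S(3^n + e) = S(3^n - e) + w_n e,    S(2 3^n + d) = S(d) + w_n (3^n + d).
   By induction on n these yield S(m) >= w_n m / 2 for all m <= 3^(n+1).  If
   3^n <= x <= 3^(n+1), the integral interpolates between S(m) and S(m+1), so
   it is at least w_n x / 2, and w_n >= 1/(log_3 x + 1)^2 concludes. *)

Lemma pow3_pos n : 0 < 3 ^ n.
Proof. apply pow_lt; lra. Qed.

Lemma INR_le_pow3 n : INR n <= 3 ^ n.
Proof.
  induction n as [|n IH]; [simpl; lra|].
  rewrite S_INR. pose proof (pos_INR n).
  assert (1 <= 3 ^ n) by (rewrite <- (pow_O 3); apply Rle_pow; [lra|lia]).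
  simpl. lra.
Qed.

Lemma INR_pow3 n : INR (3 ^ n) = 3 ^ n.
Proof. rewrite pow_INR. replace (INR 3) with 3 by (simpl; lra). reflexivity. Qed.

Definition is_int (y : R) : Prop := exists z : Z, y = IZR z.

Lemma is_int_INR m : is_int (INR m).
Proof. exists (Z.of_nat m). apply INR_IZR_INZ. Qed.

Lemma is_int_pow3 n : is_int (3 ^ n).
Proof. exists (3 ^ Z.of_nat n)%Z. rewrite <- pow_IZR. reflexivity. Qed.

Lemma is_int_opp a : is_int a -> is_int (- a).
Proof. intros [z ->]. exists (- z)%Z. symmetry; apply opp_IZR. Qed.

Lemma is_int_add a b : is_int a -> is_int b -> is_int (a + b).
Proof. intros [u ->] [v ->]. exists (u + v)%Z. symmetry; apply plus_IZR. Qed.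

Lemma is_int_lt_succ a b : is_int a -> is_int b -> a < b -> a + 1 <= b.
Proof.
  intros [u ->] [v ->] Hlt. apply lt_IZR in Hlt.
  rewrite <- plus_IZR. apply IZR_le. lia.
Qed.

(* The recursion defining sigma_aux only consults level k on (-3^(k+1), 3^(k+1)],
   so more fuel never changes the value; hence sigmaF agrees with sigma_aux k
   wherever the latter is meaningful. *)

Lemma sigma_aux_succ k x :
  - 3 ^ k < x <= 3 ^ k -> sigma_aux (S k) x = sigma_aux k x.
Proof.
  intros H. simpl sigma_aux.
  destruct (Rlt_dec (3 ^ k) x); [lra|].
  destruct (Rle_dec x (- 3 ^ k)); [lra|]. reflexivity.
Qed.

Lemma sigma_aux_more_fuel d k x :
  - 3 ^ k < x <= 3 ^ k -> sigma_aux (d + k) x = sigma_aux k x.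
Proof.
  intros H. induction d as [|d IH]; [reflexivity|].
  change (S d + k)%nat with (S (d + k)).
  assert (3 ^ k <= 3 ^ (d + k)) by (apply Rle_pow; [lra|lia]).
  rewrite sigma_aux_succ; [exact IH|lra].
Qed.

Lemma sigmaF_eq k x : - 3 ^ k < x <= 3 ^ k -> sigmaF x = sigma_aux k x.
Proof.
  intros H. unfold sigmaF.
  set (N := Z.to_nat (up (Rabs x))).
  assert (HN : - 3 ^ N < x <= 3 ^ N).
  { destruct (archimed (Rabs x)) as [Hup _].
    assert (Hz : (0 <= up (Rabs x))%Z) by (apply le_IZR; pose proof (Rabs_pos x); lra).
    assert (E : INR N = IZR (up (Rabs x))) by (unfold N; rewrite INR_IZR_INZ, Z2Nat.id; auto).
    pose proof (INR_le_pow3 N). pose proof (Rle_abs x). pose proof (Rle_abs (- x)).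
    rewrite Rabs_Ropp in *. lra. }
  destruct (Nat.le_ge_cases N k) as [Hle|Hle].
  - replace k with ((k - N) + N)%nat by lia. rewrite sigma_aux_more_fuel; auto.
  - replace N with ((N - k) + k)%nat by lia. rewrite sigma_aux_more_fuel; auto.
Qed.

Definition weight (n : nat) : R := 1 / (INR n + 1) ^ 2.

Lemma weight_pos n : 0 < weight n.
Proof.
  unfold weight. pose proof (pos_INR n).
  apply Rdiv_lt_0_compat; [lra|]. apply pow_lt; lra.
Qed.

Lemma weight_succ_le n : weight (S n) <= weight n.
Proof.
  unfold weight. rewrite S_INR. pose proof (pos_INR n). unfold Rdiv. rewrite !Rmult_1_l.
  apply Rinv_le_contravar; [apply pow_lt; lra|]. simpl. nra.
Qed.

(* The defining equations of sigma from the informal statement; everything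
   below uses sigmaF only through these four facts. *)

Lemma sigma_base_neg x : -1 < x <= 0 -> sigmaF x = -1.
Proof.
  intros H. rewrite (sigmaF_eq 0) by (simpl; lra). simpl.
  destruct (Rle_dec x 0); [reflexivity|lra].
Qed.

Lemma sigma_base_pos x : 0 < x <= 1 -> sigmaF x = 1.
Proof.
  intros H. rewrite (sigmaF_eq 0) by (simpl; lra). simpl.
  destruct (Rle_dec x 0); [lra|reflexivity].
Qed.

Lemma sigma_rec_pos n x :
  3 ^ n < x <= 3 ^ S n -> sigmaF x = sigmaF (x - 2 * 3 ^ n) + weight n.
Proof.
  intros H. pose proof (pow3_pos n). simpl in H.
  rewrite (sigmaF_eq (S n) x) by (simpl; lra).
  rewrite (sigmaF_eq n (x - 2 * 3 ^ n)) by lra.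
  simpl sigma_aux. destruct (Rlt_dec (3 ^ n) x); [reflexivity|lra].
Qed.

Lemma sigma_rec_neg n x :
  - 3 ^ S n < x <= - 3 ^ n -> sigmaF x = sigmaF (x + 2 * 3 ^ n) - weight n.
Proof.
  intros H. pose proof (pow3_pos n). simpl in H.
  rewrite (sigmaF_eq (S n) x) by (simpl; lra).
  rewrite (sigmaF_eq n (x + 2 * 3 ^ n)) by lra.
  simpl sigma_aux. destruct (Rlt_dec (3 ^ n) x); [lra|].
  destruct (Rle_dec x (- 3 ^ n)); [reflexivity|lra].
Qed.

(* sigma is a step function: constant on every interval (z-1, z], z integer.
   Induction on the level n with |z| <= 3^n: outside (-3^(n-1), 3^(n-1)] both
   z and the whole interval are shifted by the same recursion equation. *)
Lemma sigma_step n : forall z x, is_int z -> - 3 ^ n < z <= 3 ^ n ->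
  z - 1 < x <= z -> sigmaF x = sigmaF z.
Proof.
  induction n as [|n IH]; intros z x Hz Hrange Hx; simpl in Hrange.
  - destruct (Rle_dec z 0) as [Hle|Hgt].
    + assert (-1 + 1 <= z) by (apply is_int_lt_succ; [exists (-1)%Z|..]; auto; lra).
      rewrite !sigma_base_neg; lra.
    + assert (0 + 1 <= z) by (apply is_int_lt_succ; [exists 0%Z|..]; auto; lra).
      rewrite !sigma_base_pos; lra.
  - pose proof (pow3_pos n) as Hp. pose proof (is_int_pow3 n) as Hpi.
    destruct (Rlt_dec (3 ^ n) z) as [Hhi|Hnhi].
    + assert (3 ^ n + 1 <= z) by (apply is_int_lt_succ; auto).
      rewrite (sigma_rec_pos n x), (sigma_rec_pos n z) by (simpl; lra).
      f_equal. apply IH; [|lra|lra].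
      replace (z - 2 * 3 ^ n) with (z + - (3 ^ n + 3 ^ n)) by ring.
      auto using is_int_add, is_int_opp.
    + destruct (Rle_dec z (- 3 ^ n)) as [Hlo|Hnlo].
      * assert (- 3 ^ S n + 1 <= z)
          by (apply is_int_lt_succ; auto using is_int_opp, is_int_pow3; simpl; lra).
        rewrite (sigma_rec_neg n x), (sigma_rec_neg n z) by (simpl in *; lra).
        f_equal. apply IH; [auto using is_int_add|lra|lra].
        replace (2 * 3 ^ n) with (3 ^ n + 3 ^ n) by ring. auto using is_int_add.
      * apply IH; auto; lra.
Qed.

(* The reflection
   z |-> 1 - z exchanges the integers of the blocks (3^n, 3^(n+1)] and
   (-3^(n+1), -3^n], where the recursion adds resp. subtracts the weight. *)
Lemma sigma_antisym n : forall z, is_int z -> - 3 ^ n < z <= 3 ^ n ->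
  sigmaF (1 - z) = - sigmaF z.
Proof.
  induction n as [|n IH]; intros z Hz Hrange; simpl in Hrange.
  - destruct (Rle_dec z 0) as [Hle|Hgt].
    + assert (-1 + 1 <= z) by (apply is_int_lt_succ; [exists (-1)%Z|..]; auto; lra).
      rewrite sigma_base_pos, sigma_base_neg; lra.
    + assert (0 + 1 <= z) by (apply is_int_lt_succ; [exists 0%Z|..]; auto; lra).
      rewrite sigma_base_neg, sigma_base_pos; lra.
  - pose proof (pow3_pos n) as Hp. pose proof (is_int_pow3 n) as Hpi.
    assert (H2p : is_int (2 * 3 ^ n))
      by (replace (2 * 3 ^ n) with (3 ^ n + 3 ^ n) by ring; auto using is_int_add).
    destruct (Rlt_dec (3 ^ n) z) as [Hhi|Hnhi].
    + assert (3 ^ n + 1 <= z) by (apply is_int_lt_succ; auto).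
      rewrite (sigma_rec_pos n z), (sigma_rec_neg n (1 - z)) by (simpl; lra).
      replace (1 - z + 2 * 3 ^ n) with (1 - (z - 2 * 3 ^ n)) by ring.
      rewrite IH; [ring| |lra].
      replace (z - 2 * 3 ^ n) with (z + - (2 * 3 ^ n)) by ring.
      auto using is_int_add, is_int_opp.
    + destruct (Rle_dec z (- 3 ^ n)) as [Hlo|Hnlo].
      * assert (- 3 ^ S n + 1 <= z)
          by (apply is_int_lt_succ; auto using is_int_opp, is_int_pow3; simpl; lra).
        rewrite (sigma_rec_neg n z), (sigma_rec_pos n (1 - z)) by (simpl in *; lra).
        replace (1 - z - 2 * 3 ^ n) with (1 - (z + 2 * 3 ^ n)) by ring.
        rewrite IH; [ring|auto using is_int_add|lra].
      * apply IH; auto; lra.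
Qed.

(* Partial sums sigma(1) + ... + sigma(m); by step constancy they are the
   integrals of sigma over [0, m]. *)
Fixpoint partial_sum (m : nat) : R :=
  match m with
  | O => 0
  | S m' => partial_sum m' + sigmaF (INR m)
  end.

(* Reflection about 3^n: sigma(3^n + i) = weight n - sigma(3^n + 1 - i) for
   1 <= i <= 3^n, so summing e terms past 3^n undoes the last e terms before
   3^n and adds e copies of the weight. *)
Lemma partial_sum_reflect n e : (e <= 3 ^ n)%nat ->
  partial_sum (3 ^ n + e) = partial_sum (3 ^ n - e) + weight n * INR e.
Proof.
  pose proof (INR_pow3 n) as HP. pose proof (pow3_pos n).
  induction e as [|e IH]; intros He.
  - rewrite Nat.add_0_r, Nat.sub_0_r. simpl. ring.
  - pose proof (le_INR _ _ He) as HeR. rewrite HP, S_INR in HeR. pose proof (pos_INR e).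
    rewrite Nat.add_succ_r. cbn [partial_sum]. rewrite IH by lia.
    replace (3 ^ n - e)%nat with (S (3 ^ n - S e)) by lia. cbn [partial_sum].
    replace (S (3 ^ n - S e)) with (3 ^ n - e)%nat by lia.
    assert (Hsub : INR (3 ^ n - e) = 3 ^ n - INR e) by (rewrite minus_INR, HP; [reflexivity|lia]).
    rewrite (sigma_rec_pos n (INR (S (3 ^ n + e)))) by (rewrite S_INR, plus_INR, HP; simpl; lra).
    replace (INR (S (3 ^ n + e)) - 2 * 3 ^ n) with (1 - INR (3 ^ n - e))
      by (rewrite S_INR, plus_INR, Hsub, HP; ring).
    rewrite (sigma_antisym n) by (apply is_int_INR || (rewrite Hsub; lra)).
    rewrite S_INR. ring.
Qed.

(* Translation: on (2*3^n, 3^(n+1)] sigma is sigma shifted by 2*3^n plus the weight. *)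
Lemma partial_sum_shift n d : (d <= 3 ^ n)%nat ->
  partial_sum (3 ^ n + 3 ^ n + d) = partial_sum d + weight n * (3 ^ n + INR d).
Proof.
  pose proof (INR_pow3 n) as HP. pose proof (pow3_pos n).
  induction d as [|d IH]; intros Hd.
  - rewrite Nat.add_0_r, partial_sum_reflect, Nat.sub_diag, HP by lia. simpl. ring.
  - pose proof (le_INR _ _ Hd) as HdR. rewrite HP, S_INR in HdR. pose proof (pos_INR d).
    rewrite Nat.add_succ_r. cbn [partial_sum]. rewrite IH by lia.
    rewrite (sigma_rec_pos n (INR (S (3 ^ n + 3 ^ n + d))))
      by (rewrite S_INR, !plus_INR, HP; simpl; lra).
    replace (INR (S (3 ^ n + 3 ^ n + d)) - 2 * 3 ^ n) with (INR (S d))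
      by (rewrite !S_INR, !plus_INR, HP; ring).
    rewrite !S_INR. ring.
Qed.

(* One level of the lower bound: a linear bound with slope weight n / 2 on
   [0, 3^n] extends to [0, 3^(n+1)], via reflection on [3^n, 2*3^n] and
   translation on [2*3^n, 3^(n+1)]. *)
Lemma partial_sum_bound_extend n :
  (forall m, (m <= 3 ^ n)%nat -> partial_sum m >= weight n * INR m / 2) ->
  forall m, (m <= 3 ^ S n)%nat -> partial_sum m >= weight n * INR m / 2.
Proof.
  intros Hbound m Hm. pose proof (weight_pos n). pose proof (INR_pow3 n) as HP.
  assert (E : (3 ^ S n = 3 ^ n + 3 ^ n + 3 ^ n)%nat) by (simpl; lia).
  destruct (Nat.le_gt_cases m (3 ^ n)) as [H1|H1]; [auto|].
  destruct (Nat.le_gt_cases m (3 ^ n + 3 ^ n)) as [H2|H2].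
  - replace m with (3 ^ n + (m - 3 ^ n))%nat by lia.
    rewrite partial_sum_reflect by lia.
    specialize (Hbound (3 ^ n - (m - 3 ^ n))%nat ltac:(lia)).
    rewrite !minus_INR in Hbound by lia. rewrite plus_INR, minus_INR by lia.
    rewrite HP in *. nra.
  - replace m with (3 ^ n + 3 ^ n + (m - (3 ^ n + 3 ^ n)))%nat by lia.
    rewrite partial_sum_shift by lia.
    set (d := (m - (3 ^ n + 3 ^ n))%nat).
    specialize (Hbound d ltac:(unfold d; lia)).
    pose proof (pos_INR d). rewrite !plus_INR, HP. nra.
Qed.

Lemma partial_sum_bound n m :
  (m <= 3 ^ S n)%nat -> partial_sum m >= weight n * INR m / 2.
Proof.
  revert m. apply partial_sum_bound_extend. induction n as [|n IH].
  - intros m Hm. simpl in Hm. pose proof (weight_pos 0).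
    assert (m = 0 \/ m = 1)%nat as [-> | ->] by lia; simpl.
    + lra.
    + rewrite sigma_base_pos by lra. unfold weight. simpl. lra.
  - intros m Hm. pose proof (partial_sum_bound_extend n IH m Hm).
    pose proof (weight_succ_le n). pose proof (pos_INR m). nra.
Qed.

Lemma IsStepFun_const_interior f a b v :
  a <= b -> (forall t, a < t < b -> f t = v) -> IsStepFun f a b.
Proof.
  intros Hab Hf. exists (cons a (cons b nil)), (cons v nil).
  repeat split.
  - intros i Hi. simpl in Hi. replace i with 0%nat by lia. simpl. lra.
  - simpl. rewrite Rmin_left; lra.
  - simpl. rewrite Rmax_right; lra.
  - intros i Hi. simpl in Hi. replace i with 0%nat by lia. exact Hf.
Qed.

Lemma integrable_const_interior f a b v :
  a <= b -> (forall t, a < t < b -> f t = v) -> Riemann_integrable f a b.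
Proof.
  intros Hab Hf eps.
  exists (mkStepFun (IsStepFun_const_interior f a b v Hab Hf)), (mkStepFun (StepFun_P4 a b 0)).
  split.
  - intros t _. simpl. unfold fct_cte. rewrite Rminus_diag, Rabs_R0. lra.
  - rewrite StepFun_P18, Rmult_0_l, Rabs_R0. apply cond_pos.
Qed.

Lemma RiemannInt_const_interior f a b v (pr : Riemann_integrable f a b) :
  a <= b -> (forall t, a < t < b -> f t = v) -> RiemannInt pr = v * (b - a).
Proof.
  intros Hab Hf.
  rewrite (RiemannInt_P18 pr (RiemannInt_P14 a b v) Hab) by (intros; apply Hf; lra).
  apply RiemannInt_P15.
Qed.

Lemma integral_unit_piece j y : INR j <= y <= INR j + 1 ->
  { pr : Riemann_integrable sigmaF (INR j) y | RiemannInt pr = sigmaF (INR (S j)) * (y - INR j) }.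
Proof.
  intros Hy.
  assert (Hconst : forall t, INR j < t < y -> sigmaF t = sigmaF (INR (S j))).
  { intros t Ht. pose proof (pos_INR j). pose proof (INR_le_pow3 (S j)).
    apply (sigma_step (S j)); [apply is_int_INR|rewrite S_INR in *; lra..]. }
  exists (integrable_const_interior _ _ _ _ (proj1 Hy) Hconst).
  apply RiemannInt_const_interior; [lra|exact Hconst].
Qed.

Lemma integral_to_nat m :
  { pr : Riemann_integrable sigmaF 0 (INR m) | RiemannInt pr = partial_sum m }.
Proof.
  induction m as [|m [pr1 H1]].
  - exists (RiemannInt_P7 sigmaF 0). apply RiemannInt_P9.
  - destruct (integral_unit_piece m (INR (S m))) as [pr2 H2]; [rewrite S_INR; lra|].
    exists (RiemannInt_P24 pr1 pr2).
    rewrite <- (RiemannInt_P26 pr1 pr2 (RiemannInt_P24 pr1 pr2)), H1, H2.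
    cbn [partial_sum]. rewrite S_INR. ring.
Qed.

Lemma integral_formula m x : INR m < x <= INR m + 1 ->
  { pr : Riemann_integrable sigmaF 0 x |
    RiemannInt pr = partial_sum m + sigmaF (INR (S m)) * (x - INR m) }.
Proof.
  intros Hx.
  destruct (integral_to_nat m) as [pr1 H1].
  destruct (integral_unit_piece m x) as [pr2 H2]; [lra|].
  exists (RiemannInt_P24 pr1 pr2).
  rewrite <- (RiemannInt_P26 pr1 pr2 (RiemannInt_P24 pr1 pr2)), H1, H2. reflexivity.
Qed.

Lemma unit_interval_of x : 0 < x -> exists m, INR m < x <= INR m + 1.
Proof.
  intros Hx. destruct (archimed (- x)) as [Hup1 Hup2].
  assert (Hz : (0 <= - up (- x))%Z).
  { assert (IZR (up (- x)) < 1) by lra.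
    apply lt_IZR in H. lia. }
  exists (Z.to_nat (- up (- x))).
  rewrite INR_IZR_INZ, Z2Nat.id, opp_IZR by exact Hz. lra.
Qed.

Lemma ternary_block_of x : 1 <= x -> exists n, 3 ^ n <= x <= 3 ^ S n.
Proof.
  intros Hx.
  assert (Hblock : forall N y, 1 <= y <= 3 ^ N -> exists n, 3 ^ n <= y <= 3 ^ S n).
  { induction N as [|N IH]; intros y Hy.
    - exists 0%nat. simpl in *. lra.
    - destruct (Rle_dec y (3 ^ N)); [apply IH; lra|].
      exists N. lra. }
  destruct (unit_interval_of x) as [m Hm]; [lra|].
  apply (Hblock (S m)). pose proof (INR_le_pow3 (S m)). rewrite S_INR in *. lra.
Qed.

Lemma weight_vs_log x n : 3 ^ n <= x -> 1 / (2 * (log3 x + 1) ^ 2) <= weight n / 2.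
Proof.
  intros Hx. pose proof (pow3_pos n). pose proof (pos_INR n).
  assert (Hln3 : 0 < ln 3) by (rewrite <- ln_1; apply ln_increasing; lra).
  assert (Hln : INR n * ln 3 <= ln x).
  { rewrite <- ln_pow by lra. destruct (Rle_lt_or_eq_dec _ _ Hx) as [Hlt|Heq].
    - left. apply ln_increasing; lra.
    - rewrite Heq. lra. }
  assert (Hlog : INR n <= log3 x).
  { unfold log3. apply (Rmult_le_reg_r (ln 3)); [exact Hln3|].
    unfold Rdiv. rewrite Rmult_assoc, Rinv_l by lra. lra. }
  unfold weight. replace (1 / (INR n + 1) ^ 2 / 2) with (1 / (2 * (INR n + 1) ^ 2)) by (field; lra).
  unfold Rdiv. rewrite !Rmult_1_l.
  apply Rinv_le_contravar; [nra|]. nra.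
Qed.

Theorem mainTheorem5 :
  forall x : R, 1 <= x ->
    exists pr : Riemann_integrable sigmaF 0 x,
      RiemannInt pr >= x / (2 * (log3 x + 1) ^ 2).
Proof.
  intros x Hx.
  destruct (ternary_block_of x Hx) as [n Hn].
  destruct (unit_interval_of x) as [m Hm]; [lra|].
  destruct (integral_formula m x Hm) as [pr Hpr].
  exists pr. rewrite Hpr.
  assert (Hm3 : (S m <= 3 ^ S n)%nat).
  { apply INR_le. rewrite S_INR, INR_pow3.
    apply is_int_lt_succ; [apply is_int_INR|apply is_int_pow3|lra]. }
  (* The integral interpolates between two partial sums, both above the line
     of slope weight n / 2. *)
  pose proof (partial_sum_bound n m ltac:(lia)) as Hlow.
  pose proof (partial_sum_bound n (S m) Hm3) as Hhigh.
  cbn [partial_sum] in Hhigh. rewrite S_INR in *.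
  assert (Hinterp : partial_sum m + sigmaF (INR m + 1) * (x - INR m) >= weight n * x / 2)
    by nra.
  assert (Hdensity : x * (1 / (2 * (log3 x + 1) ^ 2)) <= x * (weight n / 2))
    by (apply Rmult_le_compat_l; [lra|apply weight_vs_log, Hn]).
  replace (x / (2 * (log3 x + 1) ^ 2)) with (x * (1 / (2 * (log3 x + 1) ^ 2)))
    by (unfold Rdiv; ring).
  lra.
Qed.
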